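(* Let $q,d\in\mathbb{N}$, $\mathcal J$ a partition of $[qd]$, $\mathcal K$ a partition of $[d]$, and $A$ a real $d$-tensor. Then \[ \|A\circ 1_{L(\mathcal K)}\|_{\mathcal J}\le 2^{|\mathcal K|(|\mathcal K|-1)/2}\|A\|_{\mathcal J}. \]
   Context: For $d$-tensors $A,B$ indexed by $[n]^d$, $A\circ B=(a_{\mathbf i}b_{\mathbf i})_{\mathbf i}$ is the Hadamard product; for $C\subseteq[n]^d$, $1_C$ is the $d$-tensor with entries $1$ on $C$ and $0$ elsewhere. For $\mathcal K=\{K_1,\dots,K_a\}$ a partition of $[d]$, $L(\mathcal K)=\{\mathbf i\in[n]^d: i_k=i_l\iff \exists j: k,l\in K_j\}$. For an $m$-tensor $B$ and a partition $\mathcal J=\{J_1,\dots,J_k\}$ of $[m]$, $\|B\|_{\mathcal J}:=\sup\{\sum_{\mathbf i\in[n]^m}b_{\mathbf i}\prod_{l=1}^kx^{(l)}_{\mathbf i_{J_l}}:x^{(l)}\in\mathbb{R}^{[n]^{J_l}},\|x^{(l)}\|_2\le1\}$. For a $d$-tensor $A$, $e_q(A)$ is the $qd$-tensor with $(e_q(A))_{i_1\dots i_{qd}}=a_{i_1i_{q+1}\dots i_{(d-1)q+1}}$ if $i_{kq+j}=i_{kq+1}$ for all $k=0,\dots,d-1$, $j=2,\dots,q$, and $0$ otherwise; for a partition $\mathcal J$ of $[qd]$, $\|A\|_{\mathcal J}:=\|e_q(A)\|_{\mathcal J}$. *)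

From mathcomp Require Import all_boot.
From Stdlib Require Import Reals ClassicalEpsilon.

Set Implicit Arguments.
Unset Strict Implicit.
Unset Printing Implicit Defensive.

(* Supremum of a set of reals (least upper bound if it exists, 0 otherwise). *)
Definition Rsup (S : R -> Prop) : R :=
  match excluded_middle_informative (exists s, is_lub S s) with
  | left H => proj1_sig (constructive_indefinite_description _ H)
  | right _ => 0%R
  end.

Definition index (m n : nat) := {ffun 'I_m -> 'I_n}.
Definition tensor (m n : nat) := index m n -> R.

Definition hadamard (m n : nat) (A B : tensor m n) : tensor m n :=
  fun i => (A i * B i)%R.
Definition indic (m n : nat) (C : {set index m n}) : tensor m n :=
  fun i => if i \in C then 1%R else 0%R.

Definition Lset (d n : nat) (K : {set {set 'I_d}}) : {set index d n} :=
  [set i : index d n | [forall k : 'I_d, forall l : 'I_d,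
      (i k == i l) == [exists S in K, (k \in S) && (l \in S)]]].

Definition restr (m n : nat) (S : {set 'I_m}) (i : index m n)
  : {ffun {k : 'I_m | k \in S} -> 'I_n} :=
  [ffun k => i (val k)].

Definition pnorm (m n : nat) (J : {set {set 'I_m}}) (B : tensor m n) : R :=
  Rsup (fun v => exists x : forall S : {set 'I_m},
                              {ffun {k : 'I_m | k \in S} -> 'I_n} -> R,
          (forall S, S \in J ->
             (sqrt (\big[Rplus/0%R]_(t : {ffun {k : 'I_m | k \in S} -> 'I_n})
                       (x S t * x S t)%R) <= 1)%R) /\
          v = \big[Rplus/0%R]_(i : index m n)
                (B i * \big[Rmult/1%R]_(S in J) x S (restr S i))%R).

(* e_q(A) for a d-tensor A (0-indexed positions p = k*q + j, j < q):
   (e_q A)_i = a_{(i_{kq})_k} if i is constant on each block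
   {kq, ..., kq+q-1}, and 0 otherwise.  Written as a sum over the (for q>0
   unique, if any) j in [n]^d with i_p = j_{p / q} for all p. *)
Definition eq_tensor (q d n : nat) (A : tensor d n) : tensor (q * d) n :=
  fun i => \big[Rplus/0%R]_(a : index d n)
     (if [forall p : 'I_(q * d), forall k : 'I_d,
            (p %/ q == k)%N ==> (i p == a k)]
      then A a else 0%R).

Definition qnorm (q d n : nat) (J : {set {set 'I_(q * d)}}) (A : tensor d n) : R :=
  pnorm J (@eq_tensor q d n A).

From Pilot Require Import Defs.
From HB Require Import structures.
From mathcomp Require Import all_boot.
From Stdlib Require Import Reals Lra ClassicalEpsilon.

(* Fix a feasible family of test vectors x for the norm of e_q(.).  Pairing
   e_q(B) with x gives  sum_a B(a) W_x(a), where W_x(a) sums the test products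
   over the multi-indices of [n]^{qd} that are constant equal to a_k on each
   block {kq, ..., kq+q-1}.  A "rank-one" factor  prod_k g_k(a_k)  with
   |g_k| <= 1 can be absorbed into x (multiply the test vector of the part
   containing kq by g_k), so it costs nothing.  Call a tensor D a multiplier of
   weight w if  sum_a A(a) D(a) prod_k g_k(a_k) W_x(a) <= w ||A||_J  for all
   such g and feasible x.  Then
   - 1 has weight 1 (absorption);
   - D * [a_k = a_l] keeps the weight of D: averaging over random signs
     eps in {+-1}^n, the factor eps(a_k) eps(a_l) is rank one and averages to
     [a_k = a_l];
   - D * (1 - [a_k = a_l]) has twice the weight of D (difference of two terms).
   Finally 1_{L(K)} is a product of d equality factors a_k = a_{rep k}
   (rep a fixed representative of the block of k) and of  C(|K|, 2)
   factors  1 - [a_r = a_s]  over pairs of distinct representatives. *)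

Set Implicit Arguments.
Unset Strict Implicit.
Unset Printing Implicit Defensive.

Lemma Rplus_assoc' : associative Rplus.
Proof. by move=> x y z; rewrite Rplus_assoc. Qed.
Lemma Rmult_assoc' : associative Rmult.
Proof. by move=> x y z; rewrite Rmult_assoc. Qed.
HB.instance Definition _ :=
  Monoid.isComLaw.Build R 0%R Rplus Rplus_assoc' Rplus_comm Rplus_0_l.
HB.instance Definition _ :=
  Monoid.isComLaw.Build R 1%R Rmult Rmult_assoc' Rmult_comm Rmult_1_l.
HB.instance Definition _ := Monoid.isMulLaw.Build R 0%R Rmult Rmult_0_l Rmult_0_r.
HB.instance Definition _ :=
  Monoid.isAddLaw.Build R Rmult Rplus Rmult_plus_distr_r Rmult_plus_distr_l.

Open Scope R_scope.

Lemma sum_le (I : Type) (r : seq I) (P : pred I) (F G : I -> R) :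
  (forall i, P i -> F i <= G i) ->
  \big[Rplus/0]_(i <- r | P i) F i <= \big[Rplus/0]_(i <- r | P i) G i.
Proof.
move=> FG; apply: (big_ind2 (fun x y => x <= y)) => //; first lra.
by move=> *; lra.
Qed.

Lemma sum_ge0 (I : Type) (r : seq I) (P : pred I) (F : I -> R) :
  (forall i, P i -> 0 <= F i) -> 0 <= \big[Rplus/0]_(i <- r | P i) F i.
Proof.
move=> F0; apply: (big_ind (fun x => 0 <= x)) => //; first lra.
by move=> *; lra.
Qed.

Lemma sum_opp (I : Type) (r : seq I) (P : pred I) (F : I -> R) :
  \big[Rplus/0]_(i <- r | P i) (- F i) = - \big[Rplus/0]_(i <- r | P i) F i.
Proof.
symmetry; apply: (big_morph Ropp); last by rewrite Ropp_0.
by move=> a b; rewrite Ropp_plus_distr.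
Qed.

Lemma prod_abs_le1 (I : Type) (r : seq I) (P : pred I) (F : I -> R) :
  (forall i, P i -> Rabs (F i) <= 1) ->
  Rabs (\big[Rmult/1]_(i <- r | P i) F i) <= 1.
Proof.
move=> F1; apply: (big_ind (fun x => Rabs x <= 1)); first by rewrite Rabs_R1; lra.
  move=> x y Hx Hy; rewrite Rabs_mult.
  by have := Rabs_pos x; have := Rabs_pos y; nra.
exact: F1.
Qed.

Lemma prod_indicator (T : Type) (r : seq T) (b : pred T) :
  \big[Rmult/1]_(p <- r) (if b p then 1 else 0) = if all b r then 1 else 0.
Proof.
elim: r => [|p r IH]; first by rewrite big_nil.
by rewrite big_cons IH /=; case: (b p); case: (all b r) => /=; ring.
Qed.

Lemma prod_at (m : nat) (u : 'I_m) (F : 'I_m -> R) :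
  \big[Rmult/1]_(w < m) (if w == u then F w else 1) = F u.
Proof. by rewrite -big_mkcond big_pred1_eq. Qed.

Lemma Rsup_lub (S : R -> Prop) :
  (exists v, S v) -> (exists M, forall v, S v -> v <= M) -> is_lub S (Rsup S).
Proof.
move=> [v Sv] [M HM]; rewrite /Rsup; case: excluded_middle_informative => [H|H].
  by case: constructive_indefinite_description.
by case: H; have [m Hm] := completeness S (ex_intro _ M HM) (ex_intro _ v Sv); exists m.
Qed.

Section Signs.
Variable m : nat.
Definition sgn (b : bool) : R := if b then 1 else -1.

Lemma sum_signs_prod (h : 'I_m -> bool -> R) :
  \big[Rplus/0]_(e : {ffun 'I_m -> bool}) \big[Rmult/1]_(w < m) h w (e w)
  = \big[Rmult/1]_(w < m) (h w true + h w false).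
Proof. by rewrite -bigA_distr_bigA; apply: eq_bigr => w _; rewrite big_bool. Qed.

Lemma sum_signs_const (c : R) :
  \big[Rplus/0]_(e : {ffun 'I_m -> bool}) c = 2 ^ m * c.
Proof.
have count : \big[Rplus/0]_(e : {ffun 'I_m -> bool}) 1 = 2 ^ m.
  transitivity (\big[Rplus/0]_(e : {ffun 'I_m -> bool})
                  \big[Rmult/1]_(w < m) (fun (_ : 'I_m) (_ : bool) => 1) w (e w)).
    by apply: eq_bigr => e _; rewrite big1_eq.
  rewrite (sum_signs_prod (fun _ _ => 1)); elim: m => [|k IH]; first by rewrite big_ord0.
  by rewrite big_ord_recr /= IH; ring.
rewrite -count big_distrl /=; apply: eq_bigr => e _; ring.
Qed.

Lemma sum_signs_orth (u v : 'I_m) :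
  \big[Rplus/0]_(e : {ffun 'I_m -> bool}) (sgn (e u) * sgn (e v))
  = 2 ^ m * (if u == v then 1 else 0).
Proof.
have [<-|neq_uv] := eqVneq u v.
  rewrite -sum_signs_const.
  by apply: eq_bigr => e _; rewrite /sgn; case: (e u); lra.
rewrite Rmult_0_r.
pose h w b := (if w == u then sgn b else 1) * (if w == v then sgn b else 1).
transitivity (\big[Rmult/1]_(w < m) (h w true + h w false)).
  rewrite -sum_signs_prod; apply: eq_bigr => e _; rewrite big_split /=.
  by rewrite (prod_at u (fun w => sgn (e w))) (prod_at v (fun w => sgn (e w))).
rewrite (bigD1 u) //= /h eqxx (negPf neq_uv) /sgn; lra.
Qed.
End Signs.

Section TestVectors.
Variables (m n : nat) (J : {set {set 'I_m}}).

Definition testvec := forall S : {set 'I_m}, {ffun {k : 'I_m | k \in S} -> 'I_n} -> R.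

Definition feasible (x : testvec) : Prop :=
  forall S, S \in J ->
    sqrt (\big[Rplus/0]_(t : {ffun {k : 'I_m | k \in S} -> 'I_n}) (x S t * x S t)) <= 1.

Definition testprod (x : testvec) (i : Defs.index m n) : R :=
  \big[Rmult/1]_(S in J) x S (restr S i).

Definition pairing (B : tensor m n) (x : testvec) : R :=
  \big[Rplus/0]_(i : Defs.index m n) (B i * testprod x i).

Lemma feasible_abs (x : testvec) S t : feasible x -> S \in J -> Rabs (x S t) <= 1.
Proof.
move=> Hx HS; have := Hx S HS.
set s := \big[Rplus/0]_(u : {ffun _ -> 'I_n}) _ => Hs.
have s0 : 0 <= s by apply: sum_ge0 => u _; nra.
have s1 : s <= 1 by rewrite -(sqrt_sqrt s s0); have := sqrt_pos s; nra.
have : x S t * x S t <= s.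
  rewrite /s (bigD1 t) //= -{1}[x S t * x S t]Rplus_0_r.
  by apply: Rplus_le_compat_l; apply: sum_ge0 => u _; nra.
by move=> ?; rewrite /Rabs; case: Rcase_abs => ?; nra.
Qed.

Lemma testprod_abs (x : testvec) i : feasible x -> Rabs (testprod x i) <= 1.
Proof. by move=> Hx; apply: prod_abs_le1 => S HS; exact: feasible_abs. Qed.

Lemma pnorm_lub (B : tensor m n) :
  is_lub (fun v => exists x, feasible x /\ v = pairing B x) (pnorm J B).
Proof.
apply: Rsup_lub.
  exists (pairing B (fun _ _ => 0)), (fun _ _ => 0); split => // S _.
  by rewrite big1 ?sqrt_0 => *; lra.
exists (\big[Rplus/0]_(i : Defs.index m n) Rabs (B i)) => _ [x [Hx ->]].
apply: sum_le => i _; have := testprod_abs i Hx; have := Rabs_pos (B i).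
by have := Rle_abs (B i * testprod x i); rewrite Rabs_mult; nra.
Qed.

Lemma pairing_le_pnorm (B : tensor m n) x : feasible x -> pairing B x <= pnorm J B.
Proof. by move=> Hx; case: (pnorm_lub B) => ub _; apply: ub; exists x. Qed.

Lemma pnorm_le (B : tensor m n) c :
  (forall x, feasible x -> pairing B x <= c) -> pnorm J B <= c.
Proof. by move=> H; case: (pnorm_lub B) => _; apply => _ [x [Hx ->]]; exact: H. Qed.
End TestVectors.

Section Embedding.
Variables (q d n : nat) (J : {set {set 'I_(q * d)}}).
Hypothesis q_gt0 : (0 < q)%nat.
Hypothesis partJ : partition J [set: 'I_(q * d)].

Definition blockwise (i : Defs.index (q * d)%nat n) (a : Defs.index d n) : bool :=
  [forall p : 'I_(q * d), forall k : 'I_d, (p %/ q == k)%nat ==> (i p == a k)].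

Definition weight (x : testvec (q * d)%nat n) (a : Defs.index d n) : R :=
  \big[Rplus/0]_(i : Defs.index (q * d)%nat n) (if blockwise i a then testprod J x i else 0).

Lemma pairing_eq_tensor (A : tensor d n) x :
  pairing J (@eq_tensor q d n A) x = \big[Rplus/0]_(a : Defs.index d n) (A a * weight x a).
Proof.
rewrite /pairing /eq_tensor; under eq_bigr do rewrite big_distrl /=.
rewrite exchange_big /=; apply: eq_bigr => a _.
rewrite /weight big_distrr /=; apply: eq_bigr => i _.
by rewrite /blockwise; case: ifP => _; lra.
Qed.

Lemma block_start_subproof (k : 'I_d) : (k * q < q * d)%nat.
Proof. by rewrite mulnC ltn_pmul2l. Qed.

Definition block_start (k : 'I_d) : 'I_(q * d) := Ordinal (block_start_subproof k).

Lemma blockwise_start (i : Defs.index (q * d)%nat n) a k :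
  blockwise i a -> i (block_start k) = a k.
Proof.
move=> /forallP/(_ (block_start k))/forallP/(_ k)/implyP ia; apply/eqP; apply: ia.
by rewrite /= mulnK.
Qed.

(* The factor by which the test vector of a part S is multiplied: the product
   of g_k(t_{kq}) over the blocks k whose first position kq lies in S. *)
Definition rank_one_factor (g : 'I_d -> 'I_n -> R) (S : {set 'I_(q * d)})
  (t : {ffun {p : 'I_(q * d) | p \in S} -> 'I_n}) : R :=
  \big[Rmult/1]_(k < d)
     oapp (fun s => g k (t s)) 1 (insub (block_start k) : option {p | p \in S}).

Lemma rank_one_factor_restr g S (i : Defs.index (q * d)%nat n) :
  rank_one_factor g (restr S i) =
  \big[Rmult/1]_(k < d) (if block_start k \in S then g k (i (block_start k)) else 1).
Proof.
apply: eq_bigr => k _; case: insubP => [s Hs Hv|Hn] /=.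
  by rewrite Hs /restr ffunE Hv.
by rewrite (negbTE Hn).
Qed.

(* Since J partitions [qd], each first position lies in exactly one part. *)
Lemma prod_rank_one_factor g (i : Defs.index (q * d)%nat n) :
  \big[Rmult/1]_(S in J) rank_one_factor g (restr S i) =
  \big[Rmult/1]_(k < d) g k (i (block_start k)).
Proof.
case/and3P: partJ => /eqP coverJ trivJ _.
under eq_bigr do rewrite rank_one_factor_restr.
rewrite exchange_big /=; apply: eq_bigr => k _.
have kJ : block_start k \in cover J by rewrite coverJ inE.
rewrite (bigD1 (pblock J (block_start k))) /=; last exact: pblock_mem.
rewrite mem_pblock kJ big1 ?Rmult_1_r // => S /andP [SJ S_ne].
case: ifP => // kS; case/negP: S_ne.
by rewrite (def_pblock trivJ SJ kS).
Qed.

Definition rank_one (g : 'I_d -> 'I_n -> R) (a : Defs.index d n) : R :=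
  \big[Rmult/1]_(k < d) g k (a k).

Definition bounded (g : 'I_d -> 'I_n -> R) : Prop := forall k v, Rabs (g k v) <= 1.

Lemma absorb_rank_one (x : testvec (q * d)%nat n) g :
  feasible J x -> bounded g ->
  exists2 y, feasible J y & forall a, weight y a = rank_one g a * weight x a.
Proof.
move=> Hx Hg; exists (fun S t => x S t * rank_one_factor g t).
  move=> S SJ; apply: Rle_trans (Hx S SJ); apply: sqrt_le_1_alt.
  apply: sum_le => t _; set f := rank_one_factor g t.
  have f_le1 : Rabs f <= 1.
    apply: prod_abs_le1 => k _; case: insubP => [s _ _|_] /=; first exact: Hg.
    by rewrite Rabs_R1; lra.
  have ff_le1 : f * f <= 1 by move: f_le1; rewrite /Rabs; case: Rcase_abs => ?; nra.
  by have := Rle_0_sqr (x S t); rewrite /Rsqr; nra.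
move=> a; rewrite /weight big_distrr /=; apply: eq_bigr => i _.
case: ifP => ia; last lra.
rewrite /testprod big_split /= prod_rank_one_factor Rmult_comm; congr (_ * _).
by apply: eq_bigr => k _; rewrite (blockwise_start k ia).
Qed.
End Embedding.

Section Multipliers.
Variables (q d n : nat) (J : {set {set 'I_(q * d)}}) (A : tensor d n).
Hypothesis q_gt0 : (0 < q)%nat.
Hypothesis partJ : partition J [set: 'I_(q * d)].

Definition weighted (B : tensor d n) (x : testvec (q * d)%nat n) : R :=
  \big[Rplus/0]_(a : Defs.index d n) (A a * B a * weight J x a).

Definition multiplier (w : R) (D : tensor d n) : Prop :=
  forall x, feasible J x -> forall g, bounded g ->
    weighted (fun a => D a * rank_one g a) x <= w * qnorm J A.

Lemma weighted_ext (B B' : tensor d n) x :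
  (forall a, B a = B' a) -> weighted B x = weighted B' x.
Proof. by move=> BB'; apply: eq_bigr => a _; rewrite BB'. Qed.

Lemma multiplier_ext w (D D' : tensor d n) :
  (forall a, D a = D' a) -> multiplier w D -> multiplier w D'.
Proof.
move=> DD' mD x Hx g Hg.
by rewrite -(weighted_ext (B := fun a => D a * rank_one g a)) => [|a]; [exact: mD | rewrite DD'].
Qed.

Lemma multiplier_one : multiplier 1 (fun _ => 1).
Proof.
move=> x Hx g Hg; have [y Hy weight_y] := absorb_rank_one q_gt0 partJ Hx Hg.
have := pairing_le_pnorm (@eq_tensor q d n A) Hy.
rewrite pairing_eq_tensor Rmult_1_l /qnorm; apply: Rle_trans; apply: Req_le.
by apply: eq_bigr => a _; rewrite weight_y; ring.
Qed.

Lemma multiplier_qnorm w D (B : tensor d n) :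
  multiplier w D -> (forall a, B a = A a * D a) -> qnorm J B <= w * qnorm J A.
Proof.
move=> mD BAD; rewrite {1}/qnorm; apply: pnorm_le => x Hx.
have unit_bounded : bounded (fun (_ : 'I_d) (_ : 'I_n) => 1).
  by move=> k v; rewrite Rabs_R1; lra.
apply: Rle_trans (mD x Hx _ unit_bounded); apply: Req_le.
rewrite pairing_eq_tensor; apply: eq_bigr => a _.
by rewrite BAD /rank_one big1_eq; ring.
Qed.

(* Flipping the sign of one coordinate function of g bounds the negated
   pairing as well. *)
Lemma multiplier_opp w D (u : 'I_d) x g :
  multiplier w D -> feasible J x -> bounded g ->
  - weighted (fun a => D a * rank_one g a) x <= w * qnorm J A.
Proof.
move=> mD Hx Hg.
pose g' j v := g j v * (if j == u then -1 else 1).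
have Hg' : bounded g'.
  move=> j v; rewrite /g' Rabs_mult.
  by case: (j == u); rewrite ?Rabs_Ropp Rabs_R1 Rmult_1_r; exact: Hg.
apply: Rle_trans (mD x Hx g' Hg'); apply: Req_le.
rewrite /weighted -sum_opp; apply: eq_bigr => a _.
by rewrite /rank_one /g' big_split /= (prod_at u (fun _ => -1)); ring.
Qed.

Definition eq_indicator (p : 'I_d * 'I_d) (a : Defs.index d n) : R :=
  if a p.1 == a p.2 then 1 else 0.

Definition twist (p : 'I_d * 'I_d) (g : 'I_d -> 'I_n -> R)
  (e : {ffun 'I_n -> bool}) (j : 'I_d) (v : 'I_n) : R :=
  g j v * (if j == p.1 then sgn (e v) else 1) * (if j == p.2 then sgn (e v) else 1).

Lemma twist_bounded p g e : bounded g -> bounded (twist p g e).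
Proof.
move=> Hg j v; rewrite /twist !Rabs_mult.
have sgn1 b : Rabs (if b then sgn (e v) else 1) = 1.
  by case: b; rewrite ?Rabs_R1 //; case: (e v); rewrite /sgn ?Rabs_Ropp Rabs_R1.
by rewrite !sgn1; have := Hg j v; lra.
Qed.

Lemma rank_one_twist p g e a :
  rank_one (twist p g e) a = rank_one g a * sgn (e (a p.1)) * sgn (e (a p.2)).
Proof.
rewrite /rank_one /twist !big_split /=.
by rewrite (prod_at p.1 (fun w => sgn (e (a w)))) (prod_at p.2 (fun w => sgn (e (a w)))).
Qed.

Lemma weighted_sign_average (B : tensor d n) p g x :
  2 ^ n * weighted (fun a => B a * eq_indicator p a * rank_one g a) x =
  \big[Rplus/0]_(e : {ffun 'I_n -> bool})
     weighted (fun a => B a * rank_one (twist p g e) a) x.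
Proof.
rewrite /weighted exchange_big /= big_distrr /=; apply: eq_bigr => a _.
under eq_bigr do rewrite rank_one_twist.
transitivity (A a * B a * rank_one g a * weight J x a *
  \big[Rplus/0]_(e : {ffun 'I_n -> bool}) (sgn (e (a p.1)) * sgn (e (a p.2)))).
  by rewrite sum_signs_orth /eq_indicator; ring.
by rewrite big_distrr /=; apply: eq_bigr => e _; ring.
Qed.

Lemma multiplier_eq w D p :
  multiplier w D -> multiplier w (fun a => D a * eq_indicator p a).
Proof.
move=> mD x Hx g Hg.
have pos : 0 < 2 ^ n by apply: pow_lt; lra.
apply: (Rmult_le_reg_l _ _ _ pos).
rewrite (weighted_sign_average D) -sum_signs_const.
by apply: sum_le => e _; apply: mD => //; exact: twist_bounded.
Qed.

Lemma multiplier_neq w D p :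
  multiplier w D -> multiplier (2 * w) (fun a => D a * (1 - eq_indicator p a)).
Proof.
move=> mD x Hx g Hg.
have le_D := mD x Hx g Hg.
have le_eq := multiplier_opp p.1 (multiplier_eq p mD) Hx Hg.
have -> : weighted (fun a => D a * (1 - eq_indicator p a) * rank_one g a) x =
  weighted (fun a => D a * rank_one g a) x
  - weighted (fun a => D a * eq_indicator p a * rank_one g a) x.
  rewrite /weighted /Rminus -sum_opp -big_split /=; apply: eq_bigr => a _; ring.
lra.
Qed.

Lemma multiplier_eqs w D (ps : seq ('I_d * 'I_d)) :
  multiplier w D ->
  multiplier w (fun a => D a * \big[Rmult/1]_(p <- ps) eq_indicator p a).
Proof.
elim: ps D => [|p ps IH] D mD.
  by apply: multiplier_ext mD => a; rewrite big_nil Rmult_1_r.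
apply: multiplier_ext (IH _ (multiplier_eq p mD)) => a; rewrite big_cons; ring.
Qed.

Lemma multiplier_neqs w D (ps : seq ('I_d * 'I_d)) :
  multiplier w D ->
  multiplier (2 ^ size ps * w)
    (fun a => D a * \big[Rmult/1]_(p <- ps) (1 - eq_indicator p a)).
Proof.
elim: ps w D => [|p ps IH] w D mD.
  by rewrite /= Rmult_1_l; apply: multiplier_ext mD => a; rewrite big_nil Rmult_1_r.
have := IH _ _ (multiplier_neq p mD); rewrite /= -Rmult_assoc (Rmult_comm _ 2).
by apply: multiplier_ext => a; rewrite big_cons; ring.
Qed.
End Multipliers.

Close Scope R_scope.

Fixpoint pairs_of (T : Type) (s : seq T) : seq (T * T) :=
  if s is x :: s' then map (fun y => (x, y)) s' ++ pairs_of s' else [::].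

Lemma size_pairs_of (T : Type) (s : seq T) : size (pairs_of s) = 'C(size s, 2).
Proof. by elim: s => [|x s IH] //=; rewrite size_cat size_map IH binS bin1 addnC. Qed.

Lemma mem_pairs_of (T : eqType) (s : seq T) x y :
  uniq s -> (x, y) \in pairs_of s -> [/\ x \in s, y \in s & x != y].
Proof.
elim: s => [|z s IH] //= /andP [zs us].
rewrite mem_cat => /orP [/mapP [w ws [-> ->]]|/(IH us) [xs ys nxy]].
  by rewrite !inE eqxx ws orbT; split => //; apply: contraNneq zs => ->.
by rewrite !inE xs ys !orbT.
Qed.

Lemma pairs_of_mem (T : eqType) (s : seq T) x y :
  x \in s -> y \in s -> x != y -> ((x, y) \in pairs_of s) || ((y, x) \in pairs_of s).
Proof.
elim: s => [|z s IH] //=.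
rewrite !inE !mem_cat => /orP [/eqP ->|xs] /orP [/eqP ->|ys] nxy.
- by rewrite eqxx in nxy.
- by apply/orP; left; apply/orP; left; apply/mapP; exists y.
- by apply/orP; right; apply/orP; left; apply/mapP; exists x.
- by have /orP [->|->] := IH xs ys nxy; rewrite !orbT.
Qed.

Section Representatives.
Variables (d : nat) (K : {set {set 'I_d}}).
Hypothesis partK : partition K [set: 'I_d].

Let coverK k : k \in cover K.
Proof. by case/and3P: partK => /eqP -> _ _; rewrite inE. Qed.

Let trivK : trivIset K.
Proof. by case/and3P: partK. Qed.

Definition rep (k : 'I_d) : 'I_d := odflt k [pick l in pblock K k].

Lemma rep_in k : rep k \in pblock K k.
Proof.
rewrite /rep; case: pickP => [l //|none].
by move: (none k); rewrite /= mem_pblock coverK.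
Qed.

Lemma pblock_rep k : pblock K (rep k) = pblock K k.
Proof. exact: def_pblock trivK (pblock_mem (coverK k)) (rep_in k). Qed.

Lemma rep_eq k l : pblock K k = pblock K l -> rep k = rep l.
Proof.
move=> kl; rewrite /rep kl; case: pickP => [//|none].
by move: (none l); rewrite /= mem_pblock coverK.
Qed.

Lemma rep_rep k : rep (rep k) = rep k.
Proof. by apply: rep_eq; rewrite pblock_rep. Qed.

Lemma same_block k l :
  [exists S in K, (k \in S) && (l \in S)] = (pblock K k == pblock K l).
Proof.
apply/idP/eqP.
  case/existsP => S /and3P [SK kS lS].
  by rewrite (def_pblock trivK SK kS) (def_pblock trivK SK lS).
move=> kl; apply/existsP; exists (pblock K k).
by rewrite pblock_mem ?coverK // mem_pblock coverK kl mem_pblock coverK.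
Qed.

Definition reps : seq 'I_d := enum [set rep k | k in [set: 'I_d]].

Lemma size_reps : size reps = #|K|.
Proof.
rewrite /reps -cardE.
have inj : {in [set rep k | k in [set: 'I_d]] &, injective (pblock K)}.
  move=> x y /imsetP [k _ ->] /imsetP [l _ ->] kl.
  by rewrite -rep_rep -[rep l]rep_rep; apply: rep_eq.
rewrite -(card_in_imset inj); apply: eq_card => B; apply/imsetP/idP.
  by case=> x _ ->; apply: pblock_mem; exact: coverK.
move=> BK; have /set0Pn [k kB] : B != set0.
  by apply: contraTneq BK => ->; case/and3P: partK.
exists (rep k); first by apply/imsetP; exists k.
by rewrite pblock_rep (def_pblock trivK BK kB).
Qed.

Definition rep_links : seq ('I_d * 'I_d) := [seq (k, rep k) | k <- enum 'I_d].

Lemma Lset_reps (n : nat) (a : Defs.index d n) :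
  (a \in Lset n K) =
  all (fun p => a p.1 == a p.2) rep_links && all (fun p => a p.1 != a p.2) (pairs_of reps).
Proof.
rewrite inE; apply/idP/andP.
  move=> aL; have a_block k l : (a k == a l) = (pblock K k == pblock K l).
    by move/forallP: aL => /(_ k) /forallP /(_ l) /eqP ->; exact: same_block.
  split; first by apply/allP => _ /mapP [k _ ->] /=; rewrite a_block pblock_rep.
  apply/allP => -[x y] /(mem_pairs_of (enum_uniq _)) [].
  rewrite !mem_enum => /imsetP [k _ ->] /imsetP [l _ ->] nkl /=.
  rewrite a_block; apply: contra nkl => /eqP kl.
  by rewrite -rep_rep -[rep l]rep_rep (rep_eq kl).
case=> /allP links /allP sep.
have a_rep k : a k = a (rep k).
  by apply/eqP; apply: (links (k, rep k)); apply/mapP; exists k; rewrite ?mem_enum.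
apply/forallP => k; apply/forallP => l; rewrite same_block a_rep [a l]a_rep.
have [kl|nkl] := eqVneq (pblock K k) (pblock K l); first by rewrite (rep_eq kl) eqxx.
have nr : rep k != rep l by apply: contra nkl => /eqP r; rewrite -pblock_rep r pblock_rep.
have rk : rep k \in reps by rewrite mem_enum; apply/imsetP; exists k.
have rl : rep l \in reps by rewrite mem_enum; apply/imsetP; exists l.
by have /orP [/sep|/sep] := pairs_of_mem rk rl nr; rewrite //= eq_sym => /negPf ->.
Qed.
End Representatives.

Open Scope R_scope.

Lemma indic_Lset (d n : nat) (K : {set {set 'I_d}}) (a : Defs.index d n) :
  partition K [set: 'I_d] ->
  indic (Lset n K) a =
  (1 * \big[Rmult/1]_(p <- rep_links K) eq_indicator p a) *
  \big[Rmult/1]_(p <- pairs_of (reps K)) (1 - eq_indicator p a).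
Proof.
move=> partK; rewrite /indic (Lset_reps partK) /eq_indicator prod_indicator.
rewrite (eq_bigr (fun p => if a p.1 != a p.2 then 1 else 0)); last first.
  by move=> p _; case: (a p.1 == a p.2) => /=; ring.
by rewrite prod_indicator; case: all; case: all => /=; ring.
Qed.

Close Scope R_scope.

Theorem lemma5p2 (n q d : nat) (J : {set {set 'I_(q * d)}})
  (K : {set {set 'I_d}}) (A : tensor d n) :
  (0 < q)%N ->
  partition J [set: 'I_(q * d)] ->
  partition K [set: 'I_d] ->
  (qnorm J (hadamard A (indic (@Lset d n K)))
     <= 2 ^ ((#|K| * (#|K|).-1) %/ 2) * qnorm J A)%R.
Proof.
move=> q_gt0 partJ partK.
have mL := multiplier_neqs (pairs_of (reps K))
             (multiplier_eqs (rep_links K) (multiplier_one A q_gt0 partJ)).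
have size_pairs : size (pairs_of (reps K)) = (#|K| * (#|K|).-1 %/ 2)%nat.
  by rewrite size_pairs_of size_reps // bin2 divn2.
rewrite -size_pairs -[X in (_ <= X * _)%R]Rmult_1_r.
by apply: (multiplier_qnorm mL) => a; rewrite /hadamard (indic_Lset a partK).
Qed.
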